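(* Let $\mathcal E$ be a nest on a complex Banach space $X$ and let $\mathcal J$ be a $\mathcal T(\mathcal E)$-bimodule that is closed in the weak operator topology. Then $\mathcal J=\mathcal M(\Phi_{\mathcal J})$, and $\mathcal J$ is reflexive, i.e. $\mathcal J=\operatorname{Ref}\mathcal J$.
   Context: A nest $\mathcal E$ on $X$ is a family of closed linear subspaces of $X$, totally ordered by inclusion, containing $\{0\}$ and $X$, closed under arbitrary meets (intersections) and joins (norm-closed linear spans of unions). $\mathcal T(\mathcal E)=\{T\in\mathcal B(X): TE\subseteq E\ \forall E\in\mathcal E\}$. A $\mathcal T(\mathcal E)$-bimodule is a linear subspace $\mathcal J\subseteq\mathcal B(X)$ with $\mathcal T(\mathcal E)\mathcal J\subseteq\mathcal J$ and $\mathcal J\mathcal T(\mathcal E)\subseteq\mathcal J$. $\Phi_{\mathcal J}(E)=[\mathcal JE]$, the norm-closed linear span of $\{Tx:T\in\mathcal J,x\in E\}$. For a map $\Phi:\mathcal E\to\mathcal E$, $\mathcal M(\Phi)=\{T\in\mathcal B(X): TE\subseteq\Phi(E)\ \forall E\in\mathcal E\}$. For a subspace $\mathcal A\subseteq\mathcal B(X)$, $\operatorname{Ref}\mathcal A=\{T\in\mathcal B(X): Tx\in[\mathcal Ax]\ \forall x\in X\}$, where $[\mathcal Ax]$ is the norm-closed linear span of $\{Ax: A\in\mathcal A\}$. *)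

From HB Require Import structures.
From mathcomp Require Import all_boot all_algebra.
From mathcomp Require Import all_classical all_reals all_analysis.
From mathcomp.real_closed Require Import complex.
Import GRing.Theory Num.Theory.
Import numFieldNormedType.Exports.
Local Open Scope classical_set_scope.
Local Open Scope ring_scope.

Set Implicit Arguments.
Unset Strict Implicit.
Unset Printing Implicit Defensive.

Section NestDefs.
Variable R : realType.
Variable X : completeNormedModType R[i].

Definition is_linear_op (T : X -> X) : Prop :=
  forall (a : R[i]) (x y : X), T (a *: x + y) = a *: T x + T y.

Definition bounded_op (T : X -> X) : Prop :=
  is_linear_op T /\ exists M : R, forall x : X, `|T x| <= (M%:C)%C * `|x|.

Definition bounded_functional (phi : X -> R[i]) : Prop :=
  (forall (a : R[i]) (x y : X), phi (a *: x + y) = a * phi x + phi y) /\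
  exists M : R, forall x : X, `|phi x| <= (M%:C)%C * `|x|.

Definition lspan (A : set X) : set X :=
  [set x | exists (n : nat) (c : 'I_n -> R[i]) (v : 'I_n -> X),
     (forall i, A (v i)) /\ x = \sum_(i < n) c i *: v i].

Definition cspan (A : set X) : set X := closure (lspan A).

Definition closed_subspace (E : set X) : Prop :=
  closed E /\ E 0 /\ (forall (a : R[i]) x y, E x -> E y -> E (a *: x + y)).

Definition nest (N : set (set X)) : Prop :=
  (forall E, N E -> closed_subspace E) /\
  (forall E F, N E -> N F -> E `<=` F \/ F `<=` E) /\
  N [set 0] /\ N setT /\
  (forall F, F `<=` N -> N (\bigcap_(E in F) E)) /\
  (forall F, F `<=` N -> N (cspan (\bigcup_(E in F) E))).

Definition nest_alg (N : set (set X)) : set (X -> X) :=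
  [set T | bounded_op T /\ forall E, N E -> T @` E `<=` E].

Definition op_subspace (J : set (X -> X)) : Prop :=
  J `<=` bounded_op /\ J (fun _ => 0) /\
  (forall (a : R[i]) S T, J S -> J T -> J (fun x => a *: S x + T x)).

Definition bimodule (N : set (set X)) (J : set (X -> X)) : Prop :=
  op_subspace J /\
  (forall A T, nest_alg N A -> J T -> J (A \o T)) /\
  (forall A T, nest_alg N A -> J T -> J (T \o A)).

(* T is in the weak-operator-topology closure of J: every basic WOT
   neighbourhood {S | |phi_k((S - T) x_k)| < eps, k < n} of T meets J *)
Definition wot_closure (J : set (X -> X)) : set (X -> X) :=
  [set T | bounded_op T /\
     forall (n : nat) (x : 'I_n -> X) (phi : 'I_n -> X -> R[i]) (eps : R),
       (forall k, bounded_functional (phi k)) -> 0 < eps ->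
       exists2 S, J S & forall k, `|phi k (S (x k)) - phi k (T (x k))| < (eps%:C)%C].

Definition wot_closed (J : set (X -> X)) : Prop := wot_closure J `<=` J.

Definition Phi_of (J : set (X -> X)) (E : set X) : set X :=
  cspan [set T x | T in J & x in E].

Definition M_of (N : set (set X)) (Phi : set X -> set X) : set (X -> X) :=
  [set T | bounded_op T /\ forall E, N E -> T @` E `<=` Phi E].

Definition Ref (A : set (X -> X)) : set (X -> X) :=
  [set T | bounded_op T /\ forall x, cspan [set S x | S in A] (T x)].

End NestDefs.

From HB Require Import structures.
From mathcomp Require Import all_boot all_algebra.
From mathcomp Require Import all_classical all_reals all_analysis.
From mathcomp.real_closed Require Import complex.
From mathcomp Require Import zify ring lra.
Import order.Order.TTheory GRing.Theory Num.Theory.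
Import numFieldNormedType.Exports.
Local Open Scope classical_set_scope.
Local Open Scope ring_scope.

Set Implicit Arguments.
Unset Strict Implicit.
Unset Printing Implicit Defensive.

(* Always J <= Ref J <= M(Phi_J) and
   J <= M(Phi_J), so everything follows from M(Phi_J) <= J, i.e. from
   M(Phi_J) <= WOT-closure of J.  Given T in M(Phi_J) and a basic WOT
   neighbourhood built from x_1..x_n in X and functionals phi_1..phi_n, the
   vectors (phi_k (S x_k))_k, S in J, form a subspace of C^n; if T's vector
   were outside it, a linear form on C^n would give functionals psi_k with
   sum_k psi_k (S x_k) = 0 on J but sum_k psi_k (T x_k) <> 0.  The key lemma
   rules this out: the finite-rank operator G y = sum_k psi_k (T y) x_k
   (1) leaves every nest element invariant (rank-one operators of the nest
   algebra and Hahn-Banach separation), and (2) has no nonzero eigenvalue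
   (a maximal-dimension argument along the nest).  So its compression to
   span{x_k} has only the eigenvalue 0, and its trace sum_k psi_k (T x_k)
   vanishes. *)

(* Complex-linear maps; bounded operators and bounded functionals are linear
   in this sense (the scalar action of R[i] on itself is multiplication). *)
Definition complex_linear (R : realType) (U V : lmodType R[i]) (f : U -> V) : Prop :=
  forall (a : R[i]) (x y : U), f (a *: x + y) = a *: f x + f y.

Definition lin_subspace (R : realType) (U : lmodType R[i]) (S : set U) : Prop :=
  S 0 /\ forall (a : R[i]) x y, S x -> S y -> S (a *: x + y).

Local Notation rscale t x := (((t%:C)%C : complex _) *: x).

Section LinearMaps.
Variable R : realType.
Variables U V : lmodType R[i].

Section Linear.
Variable f : U -> V.
Hypothesis lin_f : complex_linear f.

Lemma lmap0 : f 0 = 0.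
Proof.
have := lin_f 1 0 0; rewrite scale1r addr0 scale1r => h.
by apply: (addIr (f 0)); rewrite add0r -h.
Qed.

Lemma lmapD x y : f (x + y) = f x + f y.
Proof. by have := lin_f 1 x y; rewrite !scale1r. Qed.

Lemma lmapZ a x : f (a *: x) = a *: f x.
Proof. by rewrite -[a *: x]addr0 lin_f lmap0 addr0. Qed.

Lemma lmapB x y : f (x - y) = f x - f y.
Proof. by rewrite lmapD -scaleN1r lmapZ scaleN1r. Qed.

Lemma lmap_sum n (c : 'I_n -> R[i]) (v : 'I_n -> U) :
  f (\sum_(k < n) c k *: v k) = \sum_(k < n) c k *: f (v k).
Proof.
elim: n c v => [|n IH] c v; first by rewrite !big_ord0 lmap0.
by rewrite !big_ord_recr /= lmapD lmapZ IH.
Qed.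

Lemma lin_subspace_preimage (S : set V) : lin_subspace S -> lin_subspace (f @^-1` S).
Proof.
case=> S0 SL; split => [|a x y Sx Sy]; first by rewrite /= lmap0.
by rewrite /= lin_f; apply: SL.
Qed.

End Linear.

Lemma lin_subspaceZ (S : set U) a x : lin_subspace S -> S x -> S (a *: x).
Proof. by case=> S0 SL Sx; rewrite -[a *: x]addr0; apply: SL. Qed.

Lemma lin_subspace_sum (S : set U) n (c : 'I_n -> R[i]) (v : 'I_n -> U) :
  lin_subspace S -> (forall k, S (v k)) -> S (\sum_(k < n) c k *: v k).
Proof.
move=> [S0 SL] Sv; elim: n c v Sv => [|n IH] c v Sv; first by rewrite big_ord0.
by rewrite big_ord_recr /= addrC; apply: SL => //; apply: IH.
Qed.

End LinearMaps.

Section NormedContinuity.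
Variable R : realType.
Variables Y Z : normedModType R[i].

Lemma norm_bounded_continuous (f : Y -> Z) (M : R) :
  complex_linear f -> (forall x, `|f x| <= (M%:C)%C * `|x|) -> continuous f.
Proof.
move=> lin_f fM x; apply/cvgrPdist_lt => e e0.
have M1 : 0 < ((`|M| + 1)%:C)%C :> R[i].
  by rewrite ltcR; apply: (lt_le_trans ltr01); rewrite lerDr.
have d0 : 0 < e / ((`|M| + 1)%:C)%C by rewrite divr_gt0.
near=> t.
have xt : `|x - t| < e / ((`|M| + 1)%:C)%C.
  by near: t; apply: (@cvgrPdist_lt _ _ _ (nbhs x) _ id x).1 cvg_id _ d0.
rewrite -(lmapB lin_f); apply: (le_lt_trans (fM _)).
apply: (@le_lt_trans _ _ (((`|M| + 1)%:C)%C * `|x - t|)).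
  apply: ler_wpM2r; first exact: normr_ge0.
  by rewrite lecR (le_trans (ler_norm M)) // lerDl.
by rewrite mulrC -ltr_pdivlMr.
Unshelve. all: end_near.
Qed.

Lemma continuous_sum n (f : 'I_n -> Y -> Z) :
  (forall k, continuous (f k)) -> continuous (fun y => \sum_(k < n) f k y).
Proof.
elim: n f => [|n IH] f hf y.
  by under eq_fun do rewrite big_ord0; exact: cst_continuous.
under eq_fun do rewrite big_ord_recr /=.
by apply: continuousD; [exact: IH | exact: hf].
Qed.

End NormedContinuity.

Section Spans.
Variable R : realType.
Variable X : completeNormedModType R[i].

Lemma closed_subspace_lin (E : set X) : closed_subspace E -> lin_subspace E.
Proof. by move=> [_ h]; exact: h. Qed.

Lemma sub_lspan (A : set X) : A `<=` lspan A.
Proof.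
move=> x Ax; exists 1%N, (fun _ => 1), (fun _ => x); split => //.
by rewrite big_ord1 scale1r.
Qed.

Lemma lspan_min (A S : set X) : lin_subspace S -> A `<=` S -> lspan A `<=` S.
Proof. by move=> sS AS x [n [c [v [Av ->]]]]; apply: lin_subspace_sum => // k; apply: AS. Qed.

Lemma sub_cspan (A : set X) : A `<=` cspan A.
Proof. by move=> x /sub_lspan; apply: subset_closure. Qed.

Lemma cspan_min (A S : set X) : closed S -> lin_subspace S -> A `<=` S -> cspan A `<=` S.
Proof.
move=> cS sS AS; rewrite /cspan (closure_id S).1 //.
by apply: closureS; apply: lspan_min.
Qed.

Lemma cspanS (A B : set X) : A `<=` B -> cspan A `<=` cspan B.
Proof.
move=> AB; apply: closureS => x [n [c [v [Av ->]]]].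
by exists n, c, v; split => // k; apply: AB.
Qed.

Lemma cspan_map (Y : normedModType R[i]) (f : X -> Y) (A : set X) (S : set Y) :
  continuous f -> complex_linear f -> closed S -> lin_subspace S ->
  (forall a, A a -> S (f a)) -> forall x, cspan A x -> S (f x).
Proof.
move=> cf lf cS sS fAS; apply: cspan_min => //; last exact: lin_subspace_preimage.
by apply: preimage_closed => // y _; exact: cf.
Qed.

End Spans.

Section BoundedMaps.
Variable R : realType.
Variable X : completeNormedModType R[i].

Lemma Re_norm (z : R[i]) : 0 <= z -> ((complex.Re z)%:C)%C = z.
Proof. by move=> z0; apply: RRe_real; apply: ger0_real. Qed.

Lemma realCM (s t : R) : ((s * t)%:C)%C = (s%:C)%C * (t%:C)%C :> R[i].
Proof. by rewrite rmorphM. Qed.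

Lemma bounded_op_linear (T : X -> X) : bounded_op T -> complex_linear T.
Proof. by case. Qed.

Lemma bounded_op_continuous (T : X -> X) : bounded_op T -> continuous T.
Proof. by move=> [lT [M hM]]; exact: (norm_bounded_continuous lT hM). Qed.

Lemma bounded_functional_linear (phi : X -> R[i]) :
  bounded_functional phi -> complex_linear (phi : X -> R[i]).
Proof. by case. Qed.

Lemma bounded_functional_continuous (phi : X -> R[i]) :
  bounded_functional phi -> continuous (phi : X -> (R[i] : numFieldType)).
Proof. by move=> [lp [M hM]]; apply: (@norm_bounded_continuous _ _ _ _ M). Qed.

Lemma bounded_functional_scale (d : R[i]) (phi : X -> R[i]) :
  bounded_functional phi -> bounded_functional (fun y => d * phi y).
Proof.
move=> [lp [M hM]]; split; first by move=> a x y; rewrite lp mulrDr mulrCA.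
exists (complex.Re `|d| * M) => y; rewrite normrM realCM Re_norm // -mulrA.
by apply: ler_wpM2l; [exact: normr_ge0 | exact: hM].
Qed.

Definition rank_one (v : X) (psi : X -> R[i]) : X -> X := fun y => psi y *: v.

Lemma rank_one_bounded v psi : bounded_functional psi -> bounded_op (rank_one v psi).
Proof.
move=> [lp [M hM]]; split; first by move=> a x y; rewrite /rank_one lp scalerDl scalerA.
exists (M * complex.Re `|v|) => y; rewrite /rank_one normrZ realCM Re_norm //.
by rewrite mulrAC; apply: ler_wpM2r; [exact: normr_ge0 | exact: hM].
Qed.

Lemma rank_one_nest_alg (N : set (set X)) v psi :
  (forall E, N E -> closed_subspace E) -> bounded_functional psi ->
  (forall E, N E -> (forall y, E y -> psi y = 0) \/ E v) ->
  nest_alg N (rank_one v psi).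
Proof.
move=> csN bp h; split; first exact: rank_one_bounded.
move=> E NE _ [y Ey <-]; rewrite /rank_one.
case: (h E NE) => [/(_ y Ey) -> | Ev]; first by rewrite scale0r; case: (csN E NE) => _ [].
exact: (lin_subspaceZ _ (closed_subspace_lin (csN E NE))).
Qed.

End BoundedMaps.

Section RealHahnBanach.
Variable R : realType.
Variable X : lmodType R[i].

Lemma rscale0 (x : X) : rscale (0 : R) x = 0. Proof. by rewrite scale0r. Qed.
Lemma rscale1 (x : X) : rscale (1 : R) x = x. Proof. by rewrite scale1r. Qed.
Lemma rscaleN1 (x : X) : rscale (-1 : R) x = - x. Proof. by rewrite rmorphN scaleN1r. Qed.
Lemma rscaleA (s t : R) (x : X) : rscale s (rscale t x) = rscale (s * t) x.
Proof. by rewrite scalerA rmorphM. Qed.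
Lemma rscaleDl (s t : R) (x : X) : rscale s x + rscale t x = rscale (s + t) x.
Proof. by rewrite -scalerDl rmorphD. Qed.

Variable p : X -> R.
Hypothesis p_subadd : forall x y, p (x + y) <= p x + p y.
Hypothesis p_hom : forall t x, 0 <= t -> p (rscale t x) = t * p x.

(* The graph of a real-linear functional on a real subspace of X that is
   dominated by the sublinear functional p. *)
Definition dominated_graph (G : set (X * R)) : Prop :=
  [/\ G (0, 0),
      (forall t x a y b, G (x, a) -> G (y, b) -> G (rscale t x + y, t * a + b)),
      (forall x a b, G (x, a) -> G (x, b) -> a = b) &
      (forall x a, G (x, a) -> a <= p x)].

Lemma real_coefficient_unique (D : set X) (z y y' : X) (t t' : R) :
  D 0 -> (forall s x1 x2, D x1 -> D x2 -> D (rscale s x1 + x2)) ->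
  ~ D z -> D y -> D y' -> y + rscale t z = y' + rscale t' z -> t = t'.
Proof.
move=> D0 Dl Dz Dy Dy' e; apply/eqP; apply/negPn/negP => tt'; apply: Dz.
have e2 : rscale (t - t') z = y' - y.
  by rewrite -rscaleDl rmorphN scaleNr -[rscale t z](addKr y) e addrA addrK addrC.
have ez : z = rscale ((t - t')^-1) (rscale (-1) y + y') + 0.
  by rewrite addr0 rscaleN1 [- y + y']addrC -e2 rscaleA mulVf ?subr_eq0 // rscale1.
by rewrite ez; apply: (Dl) => //; apply: (Dl).
Qed.

(* The one-step extension: a dominated functional defined on D extends to
   D + R z, choosing its value c at z between two suprema. *)
Lemma dominated_step_value (A : set (X * R)) z : dominated_graph A ->
  exists c, forall y a t, A (y, a) -> a + t * c <= p (y + rscale t z).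
Proof.
move=> [A0 AL _ Ad].
pose L := [set v | exists y a, A (y, a) /\ v = a - p (y - z)].
have Lub y' a' : A (y', a') -> ubound L (p (y' + z) - a').
  move=> Ay' v [y [a [Aya ->]]].
  have := Ad _ _ (AL 1 _ _ _ _ Aya Ay'); rewrite rscale1 mul1r => h.
  have e : y + y' = (y - z) + (y' + z) by rewrite addrACA addNr addr0.
  rewrite e in h; have := le_trans h (p_subadd _ _); lra.
have L0 : L (0 - p (0 - z)) by exists 0, 0; split.
have hub : has_ubound L by exists (p (0 + z) - 0); apply: Lub.
exists (sup L) => y a t Aya.
have [tn|tp|->] := ltgtP t 0; last by rewrite mul0r addr0 rscale0 addr0; apply: Ad.
- have sp : 0 < - t by rewrite oppr_gt0.
  have h : a / - t - p (rscale (- t)^-1 y - z) <= sup L.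
    apply: ub_le_sup => //; exists (rscale (- t)^-1 y + 0), ((- t)^-1 * a + 0).
    by split; [exact: AL | rewrite !addr0 mulrC].
  have e : p (y + rscale t z) = (- t) * p (rscale (- t)^-1 y - z).
    rewrite -p_hom ?ltW //; congr p.
    by rewrite scalerBr rscaleA mulfV ?gt_eqF // rscale1 rmorphN scaleNr opprK.
  rewrite e; have h2 := ler_wpM2l (ltW sp) h.
  rewrite mulrBr mulrCA mulfV ?(gt_eqF sp) // mulr1 in h2; lra.
- have h : sup L <= p (rscale t^-1 y + 0 + z) - (t^-1 * a + 0).
    by apply: ge_sup; [exists (0 - p (0 - z)) | apply: Lub; apply: AL].
  rewrite !addr0 in h.
  have e : p (y + rscale t z) = t * p (rscale t^-1 y + z).
    rewrite -p_hom ?ltW //; congr p.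
    by rewrite scalerDr rscaleA mulfV ?gt_eqF // rscale1.
  rewrite e; have h2 := ler_wpM2l (ltW tp) h.
  rewrite mulrBr mulVKf ?gt_eqF // in h2; lra.
Qed.

Lemma dominated_extend (A : set (X * R)) z : dominated_graph A ->
  ~ (exists a, A (z, a)) -> exists B, dominated_graph B /\ A `<` B.
Proof.
move=> domA nz; have [c hc] := dominated_step_value z domA.
have [A0 AL Af _] := domA.
pose B := [set q | exists y a t, A (y, a) /\ q = (y + rscale t z, a + t * c)].
have AB : A `<=` B.
  by move=> [x a] Axa; exists x, a, 0; rewrite rscale0 mul0r !addr0.
exists B; split; last first.
  split => // sBA; apply: nz; exists c; apply: sBA; exists 0, 0, 1.
  by rewrite rscale1 add0r mul1r add0r.
split; first exact: AB.
- move=> s x a y b [y1 [a1 [t1 [A1 [-> ->]]]]] [y2 [a2 [t2 [A2 [-> ->]]]]].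
  exists (rscale s y1 + y2), (s * a1 + a2), (s * t1 + t2); split; first exact: AL.
  congr (_, _); first by rewrite scalerDr rscaleA addrACA rscaleDl.
  by rewrite mulrDr mulrDl !mulrA addrACA.
- move=> x a b [y1 [a1 [t1 [A1 [-> ->]]]]] [y2 [a2 [t2 [A2 [e ->]]]]].
  have Dl s x1 x2 : (exists a, A (x1, a)) -> (exists a, A (x2, a)) ->
      exists a, A (rscale s x1 + x2, a).
    by move=> [b1 h1] [b2 h2]; exists (s * b1 + b2); apply: AL.
  have tt := real_coefficient_unique (ex_intro _ 0 A0) Dl nz
    (ex_intro _ _ A1) (ex_intro _ _ A2) e.
  subst t2; have yy : y1 = y2 by apply: (addIr (rscale t1 z)).
  by subst y2; rewrite (Af _ _ _ A1 A2).
- by move=> x a [y [a0 [t [Ay [-> ->]]]]]; apply: hc.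
Qed.

(* Graphs that are empty or dominated extensions of G0: Zorn's lemma
   applies to them since a chain of such graphs has such a union. *)
Definition dominated_extension (G0 G : set (X * R)) : Prop :=
  G = set0 \/ (dominated_graph G /\ G0 `<=` G).

Lemma dominated_chain_union (G0 : set (X * R)) (F : set (set (X * R))) :
  F `<=` dominated_extension G0 -> total_on F subset ->
  dominated_extension G0 (\bigcup_(G in F) G).
Proof.
move=> FP Ftot.
have hv G q : F G -> G q -> dominated_graph G /\ G0 `<=` G.
  by move=> FG Gq; case: (FP _ FG) => // e; rewrite e in Gq.
have [[G1 [FG1 [q1 Gq1]]]|none] := pselect (exists G, F G /\ G !=set0); last first.
  left; apply/seteqP; split => // q [G FG Gq]; apply: none; exists G; split => //.
  by exists q.
have [[G10 _ _ _] G0G1] := hv _ _ FG1 Gq1.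
right; split; last by move=> q /G0G1; exists G1.
split.
- by exists G1.
- move=> t x a y b [Ga FGa Gax] [Gb FGb Gby].
  case: (Ftot _ _ FGa FGb) => [sab|sba].
    by exists Gb => //; have [[_ h _ _] _] := hv _ _ FGb Gby; apply: h => //; exact: sab.
  by exists Ga => //; have [[_ h _ _] _] := hv _ _ FGa Gax; apply: h => //; exact: sba.
- move=> x a b [Ga FGa Gax] [Gb FGb Gbx].
  case: (Ftot _ _ FGa FGb) => [sab|sba].
    by have [[_ _ h _] _] := hv _ _ FGb Gbx; apply: h Gbx; exact: sab.
  by have [[_ _ h _] _] := hv _ _ FGa Gax; apply: h Gax _; exact: sba.
- by move=> x a [G FG Gx]; have [[_ _ _ h] _] := hv _ _ FG Gx; exact: h.
Qed.

Theorem real_hahn_banach (G0 : set (X * R)) : dominated_graph G0 ->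
  exists g : X -> R,
  [/\ (forall t x y, g (rscale t x + y) = t * g x + g y),
      (forall x, g x <= p x) &
      (forall x a, G0 (x, a) -> g x = a)].
Proof.
move=> domG0.
have [A [PA Amax]] := Zorn_bigcup (@dominated_chain_union G0).
have [domA G0A] : dominated_graph A /\ G0 `<=` A.
  case: PA => // A0; exfalso; apply: (Amax G0); last by right; split.
  rewrite A0; split => // h; have [G00 _ _ _] := domG0; exact: h _ G00.
have total z : exists a, A (z, a).
  apply: contrapT => nz; have [B [domB AB]] := dominated_extend domA nz.
  by apply: (Amax B AB); right; split => //; apply: subset_trans G0A (properW AB).
have [g hg] := choice total.
have [A0 AL Af Ad] := domA.
exists g; split.
- by move=> t x y; apply: Af (hg _) (AL _ _ _ _ _ (hg x) (hg y)).
- by move=> x; exact: Ad _ _ (hg x).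
- by move=> x a; move/G0A; exact: Af (hg x).
Qed.

End RealHahnBanach.

Section Complexification.
Variable R : realType.
Variable X : lmodType R[i].
Variable g : X -> R.
Hypothesis g_lin : forall t x y, g (rscale t x + y) = t * g x + g y.

Lemma rlin0 : g 0 = 0.
Proof.
have := g_lin 1 0 0; rewrite rscale1 addr0 mul1r => h.
by apply: (addIr (g 0)); rewrite add0r -h.
Qed.

Lemma rlinD x y : g (x + y) = g x + g y.
Proof. by rewrite -{1}[x]rscale1 g_lin mul1r. Qed.

Lemma rlinZ t x : g (rscale t x) = t * g x.
Proof. by rewrite -[rscale t x]addr0 g_lin rlin0 addr0. Qed.

Lemma rlinN x : g (- x) = - g x.
Proof. by rewrite -rscaleN1 rlinZ mulN1r. Qed.

Definition complexify (x : X) : R[i] := ((g x)%:C)%C - 'i%C * ((g ('i%C *: x))%:C)%C.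

Lemma complexify_linear : complex_linear complexify.
Proof.
have cD x y : complexify (x + y) = complexify x + complexify y.
  by rewrite /complexify scalerDr !rlinD !rmorphD mulrDr opprD addrACA.
suff cZ al x : complexify (al *: x) = al * complexify x.
  by move=> al x y; rewrite cD cZ.
set a := complex.Re al; set b := complex.Im al.
have eal : al = (a%:C)%C + 'i%C * (b%:C)%C by exact: complexE.
have e1 : al *: x = rscale a x + rscale b ('i%C *: x).
  by rewrite {1}eal scalerDl [_ * _%:C%C]mulrC scalerA.
have e2 : 'i%C *: (al *: x) = rscale a ('i%C *: x) - rscale b x.
  rewrite e1 scalerDr !scalerA [_ * a%:C%C]mulrC [_ * b%:C%C]mulrC -!scalerA.
  by congr (_ + _); rewrite (scalerA 'i%C 'i%C x) -expr2 sqr_i scaleN1r scalerN.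
rewrite /complexify e2 e1 rlinD !rlinZ rlinD rlinN !rlinZ {1}eal.
rewrite !rmorphD !rmorphN !rmorphM.
have hI : 'i%C * 'i%C = -1 :> R[i] by rewrite -expr2 sqr_i.
apply/eqP; rewrite -subr_eq0; apply/eqP.
transitivity (('i%C * 'i%C + 1) * ((b%:C)%C * ((g ('i%C *: x))%:C)%C)); first by ring.
by rewrite hI addNr mul0r.
Qed.

End Complexification.

Section Separation.
Variable R : realType.
Variable X : completeNormedModType R[i].

Lemma normCr (t : R) : `|(t%:C)%C| = ((`|t|)%:C)%C :> R[i].
Proof. by rewrite normc_def /= [0 ^+ 2]expr2 mulr0 addr0 sqrtr_sqr. Qed.

Lemma norm_i : `|'i%C| = 1 :> R[i].
Proof. by rewrite normc_def /= [0 ^+ 2]expr2 mulr0 add0r expr1n sqrtr1. Qed.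

Lemma closed_dist_gt0 (K : set X) (w : X) : closed K -> ~ K w ->
  exists2 r : R, 0 < r & forall k, K k -> ((r%:C)%C) <= `|w - k|.
Proof.
move=> Kcl Kw; have : ~ closure K w by move=> /Kcl.
move=> /existsNP [B] /not_implyP [/nbhs_ballP [e e0 sB] nI].
have e_real : e \is Num.real by apply: gtr0_real.
have e0C : 0 < e :> R[i] := e0.
exists (complex.Re e); first by move: e0C; rewrite ltcE => /andP[].
move=> k Kk; rewrite Re_norm; last exact: ltW.
rewrite real_leNgt ?inE ?normr_real //; apply/negP => ek.
by apply: nI; exists k; split => //; apply: sB; rewrite -ball_normE /ball_ /=.
Qed.

Section AtDistance.
Variables (K : set X) (w : X) (r : R).
Hypothesis K_sub : lin_subspace K.
Hypothesis K_w : ~ K w.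
Hypothesis r_gt0 : 0 < r.
Hypothesis w_far : forall k, K k -> ((r%:C)%C) <= `|w - k|.

Definition scaled_norm (x : X) : R := complex.Re `|x| / r.

Lemma scaled_norm_ge0 x : 0 <= scaled_norm x.
Proof.
by rewrite /scaled_norm divr_ge0 ?(ltW r_gt0) //; move: (normr_ge0 x); rewrite lecE => /andP[].
Qed.

Lemma scaled_norm_subadd x y : scaled_norm (x + y) <= scaled_norm x + scaled_norm y.
Proof.
rewrite /scaled_norm -mulrDl ler_pM2r ?invr_gt0 //.
by move: (ler_normD x y); rewrite lecE => /andP[_]; rewrite raddfD.
Qed.

Lemma scaled_norm_hom t x : 0 <= t -> scaled_norm (rscale t x) = t * scaled_norm x.
Proof.
move=> t0; rewrite /scaled_norm normrZ ger0_norm ?ler0c //.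
by case: `|x| => a b /=; rewrite mul0r subr0 mulrA.
Qed.

Lemma scaled_normN x : scaled_norm (- x) = scaled_norm x.
Proof. by rewrite /scaled_norm normrN. Qed.

(* The functional k + t w |-> t on K + R w, dominated by scaled_norm
   because w is at distance at least r from K. *)
Definition coordinate_graph : set (X * R) :=
  [set q | exists k t, K k /\ q = (k + rscale t w, t)].

Lemma coordinate_graph_dominated : dominated_graph scaled_norm coordinate_graph.
Proof.
have [K0 KL] := K_sub.
split.
- by exists 0, 0; split => //; rewrite rscale0 addr0.
- move=> s x a y b [k1 [t1 [K1 [-> ->]]]] [k2 [t2 [K2 [-> ->]]]].
  exists (rscale s k1 + k2), (s * t1 + t2); split; first exact: KL.
  by rewrite scalerDr rscaleA addrACA rscaleDl.
- move=> x a b [k1 [t1 [K1 [-> ->]]]] [k2 [t2 [K2 [e ->]]]].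
  by apply: (real_coefficient_unique K0 _ K_w K1 K2 e) => s x1 x2; apply: KL.
- move=> x a [k [t [Kk [-> ->]]]].
  have [t0|t0] := lerP t 0; first exact: le_trans t0 (scaled_norm_ge0 _).
  have Kk' : K (rscale (- t^-1) k) by apply: lin_subspaceZ.
  have -> : k + rscale t w = rscale t (w - rscale (- t^-1) k).
    by rewrite scalerDr scalerN rscaleA mulrN mulfV ?gt_eqF // rscaleN1 opprK addrC.
  have h1 : 1 <= scaled_norm (w - rscale (- t^-1) k).
    rewrite /scaled_norm ler_pdivlMr // mul1r.
    by move: (w_far Kk'); rewrite lecE => /andP[].
  rewrite scaled_norm_hom; last exact: ltW.
  by have := ler_wpM2l (ltW t0) h1; rewrite mulr1.
Qed.

(* Extend the coordinate functional by Hahn-Banach and complexify it; the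
   result vanishes on K, is 1 at w and is bounded by 2 |x| / r. *)
Lemma separating_functional_at_distance : exists psi : X -> R[i],
  [/\ bounded_functional psi, (forall k, K k -> psi k = 0) & psi w != 0].
Proof.
have [g [g_lin g_le g_coord]] :=
  real_hahn_banach scaled_norm_subadd scaled_norm_hom coordinate_graph_dominated.
have g_norm x : `|g x| <= scaled_norm x.
  by rewrite ler_norml g_le andbT lerNl -(rlinN g_lin) -scaled_normN g_le.
have gK k : K k -> g k = 0.
  by move=> Kk; apply: g_coord; exists k, 0; rewrite rscale0 addr0.
exists (complexify g); split.
- split; first exact: complexify_linear.
  exists (2 / r) => x; rewrite /complexify (le_trans (ler_normB _ _)) //.
  rewrite normrM norm_i mul1r !normCr -rmorphD.
  have h2 : `|g ('i%C *: x)| <= scaled_norm x.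
    by rewrite (le_trans (g_norm _)) // /scaled_norm normrZ norm_i mul1r.
  rewrite (le_trans (y := ((scaled_norm x + scaled_norm x)%:C)%C)) ?lecR ?lerD //.
  rewrite -[X in _ <= _ * X](Re_norm (normr_ge0 x)) -realCM lecR /scaled_norm.
  by rewrite le_eqVlt; apply/orP; left; apply/eqP; ring.
- move=> k Kk; rewrite /complexify gK // gK ?mulr0 ?subr0 //.
  by apply: lin_subspaceZ.
- have gw : g w = 1 by apply: g_coord; exists 0, 1; rewrite rscale1 add0r; case: K_sub.
  rewrite /complexify gw; apply/eqP => /(congr1 (@complex.Re R)) /=.
  by rewrite !mul0r !mul1r subr0 oppr0 addr0 => /eqP; rewrite oner_eq0.
Qed.

End AtDistance.

Theorem hahn_banach_separation (K : set X) (w : X) :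
  closed K -> lin_subspace K -> ~ K w ->
  exists psi : X -> R[i], [/\ bounded_functional psi,
    (forall k, K k -> psi k = 0) & psi w != 0].
Proof.
move=> Kcl Ks Kw; have [r r0 rd] := closed_dist_gt0 Kcl Kw.
exact: (separating_functional_at_distance Ks Kw r0 rd).
Qed.

End Separation.

Section FiniteDimension.
Variable R : realType.
Local Notation C := (R[i]).

Lemma row_subspace_mx n (S : set 'rV[C]_n) : lin_subspace S ->
  exists M : 'M[C]_n, forall u, S u <-> (u <= M)%MS.
Proof.
move=> [S0 SL].
suff [M [MS SM]] : exists M : 'M[C]_n,
    (forall u, (u <= M)%MS -> S u) /\ (forall u, S u -> (u <= M)%MS).
  by exists M => u; split; [exact: SM | exact: MS].
(* grow a matrix inside S, one rank at a time, until it spans S *)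
have grow k : (exists M : 'M[C]_n, (forall u, (u <= M)%MS -> S u) /\
                                   (forall u, S u -> (u <= M)%MS)) \/
              (exists M : 'M[C]_n, (forall u, (u <= M)%MS -> S u) /\ (k <= \rank M)%N).
  elim: k => [|k [done|[M [MS kM]]]]; [|by left|].
    by right; exists 0; split => // u; rewrite submx0 => /eqP ->.
  have [spans|/existsNP [v /not_implyP [Sv vM]]] :=
    pselect (forall u, S u -> (u <= M)%MS); first by left; exists M.
  right; exists (M + v)%MS; split.
    move=> u /sub_addsmxP [[q1 q2] /= ->].
    have [a ->] : exists a, q2 *m v = a *: v by apply/sub_rVP; apply: submxMl.
    by rewrite addrC; apply: SL => //; apply: MS; apply: submxMl.
  have [le_r eq_r] := mxrank_leqif_sup (addsmxSl M v).
  have : (\rank M == \rank (M + v)%MS) = false.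
    by rewrite eq_r; apply/negP => h; apply: vM; exact: submx_trans (addsmxSr M v) h.
  by move/negbT; lia.
have [//|[M [_ hM]]] := grow n.+1.
by move: (rank_leq_col M) hM; lia.
Qed.

Lemma row_separation n (V : set 'rV[C]_n) (w : 'rV[C]_n) :
  lin_subspace V -> ~ V w ->
  exists d : 'cV[C]_n, (forall v, V v -> v *m d = 0) /\ w *m d != 0.
Proof.
move=> sV Vw; have [M hM] := row_subspace_mx sV.
have : ~~ (w <= M)%MS by apply/negP => /hM.
rewrite submxE => wM.
have [j hj] : exists j, (w *m cokermx M) 0 j != 0.
  apply: contrapT => none; apply: (negP wM); apply/eqP/rowP => j.
  by rewrite [RHS]mxE; apply/eqP/negPn/negP => hj; apply: none; exists j.
exists (col j (cokermx M)); rewrite colE; split.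
  by move=> v /hM; rewrite submxE => /eqP vM; rewrite mulmxA vM mul0mx.
rewrite mulmxA -colE.
have colW : col j (w *m cokermx M) 0 0 = (w *m cokermx M) 0 j by rewrite [LHS]mxE.
by apply: contra_neq hj => cW0; rewrite -colW cW0 mxE.
Qed.

Lemma trace_eq0_of_eigen0 n (M : 'M[C]_n) :
  (forall (a : C) (v : 'rV_n), v *m M = a *: v -> v != 0 -> a = 0) -> \tr M = 0.
Proof.
case: n M => [|n] M h; first by rewrite /mxtrace big_ord0.
have [rs ers] := closed_field_poly_normal (char_poly M).
rewrite (monicP (char_poly_monic M)) scale1r in ers.
have rs0 z : z \in rs -> z = 0.
  move=> zrs; have : root (char_poly M) z by rewrite ers root_prod_XsubC.
  by rewrite -eigenvalue_root_char => /eigenvalueP [v vM v0]; exact: h vM v0.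
have charX : char_poly M = 'X^(size rs).
  rewrite ers (eq_big_seq (fun=> 'X)) => [|z /rs0 ->]; last by rewrite subr0.
  rewrite big_const_seq count_predT.
  by elim: (size rs) => [|k IH]; [rewrite expr0 | rewrite /= IH exprS].
have szr : size rs = n.+1.
  by have := size_char_poly M; rewrite charX size_polyXn => -[].
have := char_poly_trace M (ltn0Sn n); rewrite charX szr coefXn /=.
by move=> e; apply/eqP; rewrite -oppr_eq0 -e ltn_eqF.
Qed.

End FiniteDimension.

Section FiniteSections.
Variable R : realType.
Variable X : completeNormedModType R[i].
Variables (n : nat) (A : 'rV[R[i]]_n -> X).
Hypothesis A_lin : complex_linear A.

(* In any nonempty family F of subspaces some E0 has a maximal trace on the
   finite-dimensional range of A: every larger member of F has the same
   trace, i.e. meets range A only inside E0. *)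
Lemma maximal_section (F : set (set X)) :
  (forall E, F E -> lin_subspace E) -> F !=set0 ->
  exists2 E0, F E0 & forall E, F E -> E0 `<=` E -> forall c, E (A c) -> E0 (A c).
Proof.
move=> Fsub [E1 FE1].
have mrep E : exists M : 'M[R[i]]_n,
    lin_subspace E -> forall c, E (A c) <-> (c <= M)%MS.
  have [sE|nsE] := pselect (lin_subspace E); last by exists 0.
  by have [M hM] := row_subspace_mx (lin_subspace_preimage A_lin sE); exists M.
have [mx hmx] := choice mrep.
pose P k := `[< exists2 E, F E & \rank (mx E) = k >].
have Pex : exists k, P k by exists (\rank (mx E1)); apply/asboolP; exists E1.
have Pub k : P k -> (k <= n)%N by move=> /asboolP [E _ <-]; exact: rank_leq_col.
have [k /asboolP [E0 FE0 rk0] kmax] := ex_maxnP Pex Pub.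
exists E0 => // E FE sE0E c EAc.
have hE0 := hmx E0 (Fsub _ FE0); have hE := hmx E (Fsub _ FE).
have sub0 : (mx E0 <= mx E)%MS.
  by apply/row_subP => j; apply/hE/sE0E/hE0; exact: row_sub.
have [le_r eq_r] := mxrank_leqif_sup sub0.
have rkE : (\rank (mx E) <= k)%N by apply: kmax; apply/asboolP; exists E.
have /eqP : \rank (mx E0) = \rank (mx E) by lia.
by rewrite eq_r => sub1; apply/hE0; apply: submx_trans sub1; apply/hE.
Qed.

End FiniteSections.

Section NestFacts.
Variable R : realType.
Variable X : completeNormedModType R[i].
Variable N : set (set X).
Hypothesis hN : nest N.

Lemma nest_closed_subspace E : N E -> closed_subspace E.
Proof. by case: hN => h _; apply: h. Qed.

Lemma nest_total E F : N E -> N F -> E `<=` F \/ F `<=` E.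
Proof. by case: hN => _ [h _]; apply: h. Qed.

Lemma nest_zero : N [set 0].
Proof. by case: hN => _ [_ []]. Qed.

Lemma nest_meet F : F `<=` N -> N (\bigcap_(E in F) E).
Proof. by case: hN => _ [_ [_ [_ [h _]]]]; apply: h. Qed.

Lemma nest_join F : F `<=` N -> N (cspan (\bigcup_(E in F) E)).
Proof. by case: hN => _ [_ [_ [_ [_ h]]]]; apply: h. Qed.

End NestFacts.

Section KeyLemma.
Variable R : realType.
Variable X : completeNormedModType R[i].
Variables (N : set (set X)) (J : set (X -> X)) (T : X -> X).
Hypothesis hN : nest N.
Hypothesis hJ : bimodule N J.
Hypothesis hT : M_of N (Phi_of J) T.
Variable n : nat.
Variable phi : 'I_n -> X -> R[i].
Hypothesis phi_bounded : forall k, bounded_functional (phi k).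
Variable x : 'I_n -> X.
Hypothesis J_annihilated : forall S, J S -> \sum_(k < n) phi k (S (x k)) = 0.

Let T_lin : complex_linear T.
Proof. by case: hT => [[]]. Qed.

Let phi_lin k : complex_linear (phi k : X -> R[i]).
Proof. exact: bounded_functional_linear (phi_bounded k). Qed.

Definition finite_op (y : X) : X := \sum_(k < n) phi k (T y) *: x k.
Definition combination (c : 'rV[R[i]]_n) : X := \sum_(k < n) c 0 k *: x k.
Definition coords (y : X) : 'rV[R[i]]_n := \row_k phi k (T y).
Definition compression : 'M[R[i]]_n := \matrix_(k, j) phi j (T (x k)).

Lemma finite_opE y : finite_op y = combination (coords y).
Proof. by apply: eq_bigr => k _; rewrite mxE. Qed.

Lemma compressionE c : c *m compression = coords (combination c).
Proof.
apply/rowP => j; rewrite !mxE /combination (lmap_sum T_lin) (lmap_sum (phi_lin j)).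
by apply: eq_bigr => k _; rewrite !mxE.
Qed.

Lemma compression_trace : \tr compression = \sum_(k < n) phi k (T (x k)).
Proof. by apply: eq_bigr => k _; rewrite mxE. Qed.

Lemma combination_linear : complex_linear combination.
Proof.
move=> a c1 c2; rewrite /combination scaler_sumr -big_split; apply: eq_bigr => k _.
by rewrite !mxE scalerDl scalerA.
Qed.

Lemma coords_linear : complex_linear coords.
Proof. by move=> a y1 y2; apply/rowP => k; rewrite !mxE T_lin phi_lin. Qed.

Lemma finite_op_linear : complex_linear finite_op.
Proof.
by move=> a y1 y2; rewrite !finite_opE coords_linear combination_linear.
Qed.

Lemma finite_op_continuous : continuous finite_op.
Proof.
apply: continuous_sum => k y.
apply: (@continuousZr_tmp _ _ _ (fun z => phi k (T z)) (x k) y).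
apply: continuous_comp; first by apply: bounded_op_continuous; case: hT.
exact: bounded_functional_continuous.
Qed.

(* If every nest element either contains u or is annihilated by psi, then
   psi (finite_op u) = 0: composing J with the rank-one operators
   psi(.) v, v in the least nest element E_u containing u, shows that
   y |-> sum_k psi(x_k) phi_k(y) vanishes on Phi_J(E_u), which contains T u. *)
Lemma finite_op_annihilated (psi : X -> R[i]) u : bounded_functional psi ->
  (forall E, N E -> (forall y, E y -> psi y = 0) \/ E u) -> psi (finite_op u) = 0.
Proof.
move=> psi_b psi_u.
pose Eu := \bigcap_(E in [set E | N E /\ E u]) E.
have NEu : N Eu by apply: nest_meet => // E [].
pose g (y : X) : R[i] := \sum_(k < n) psi (x k) * phi k y.
have g_lin : complex_linear (g : X -> R[i]).
  move=> a y1 y2; rewrite /g scaler_sumr -big_split; apply: eq_bigr => k _.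
  by rewrite phi_lin mulrDr; congr (_ + _); exact: mulrCA.
have g_cont : continuous (g : X -> (R[i] : numFieldType)).
  apply: continuous_sum => k y; apply: continuousM; first exact: cst_continuous.
  exact: bounded_functional_continuous.
have g_range S v : J S -> Eu v -> g (S v) = 0.
  move=> JS Euv; have [[J_bop _] [_ J_right]] := hJ.
  have r1_alg : nest_alg N (rank_one v psi).
    apply: rank_one_nest_alg => // [E|E NE]; first exact: nest_closed_subspace.
    by case: (psi_u E NE) => [|Eu']; [left | right; apply: Euv].
  rewrite -(J_annihilated (J_right _ _ r1_alg JS)); apply: eq_bigr => k _.
  by rewrite /= /rank_one (lmapZ (bounded_op_linear (J_bop _ JS))) (lmapZ (phi_lin k)).
have zero_closed : closed [set 0 : (R[i] : numFieldType)].
  exact: (accessible_closed_set1 (hausdorff_accessible (@norm_hausdorff _ _))).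
have zero_sub : lin_subspace [set 0 : R[i]].
  by split => // a y1 y2 /= -> ->; rewrite scaler0 addr0.
have gTu : g (T u) = 0.
  have : Phi_of J Eu (T u) by case: hT => _ /(_ Eu NEu); apply; exists u => // E [].
  apply: (cspan_map g_cont g_lin zero_closed zero_sub) => _ [S JS [v Euv <-]].
  exact: g_range.
rewrite /finite_op (lmap_sum (bounded_functional_linear psi_b)) -[RHS]gTu.
by apply: eq_bigr => k _; rewrite mulrC.
Qed.

Lemma finite_op_invariant E y : N E -> E y -> E (finite_op y).
Proof.
move=> NE Ey; apply: contrapT => nE; have csE := nest_closed_subspace hN NE.
have [psi [psi_b psi_E]] := hahn_banach_separation csE.1 (closed_subspace_lin csE) nE.
apply/negP; rewrite negbK; apply/eqP; apply: finite_op_annihilated => // E' NE'.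
by case: (nest_total hN NE' NE) => s; [left => z /s; apply: psi_E | right; apply: s].
Qed.

Definition lower (u : X) : set X := cspan (\bigcup_(E in [set E | N E /\ ~ E u]) E).

Lemma lower_nest u : N (lower u).
Proof. by apply: nest_join => // E []. Qed.

(* An eigenvector of finite_op for a nonzero eigenvalue lies in its own
   lower space: otherwise a functional separating u from lower u would
   vanish on finite_op u = a u but not on u. *)
Lemma eigenvector_lower a u : a != 0 -> finite_op u = a *: u -> lower u u.
Proof.
move=> a0 Gu; apply: contrapT => nlow; have cs := nest_closed_subspace hN (lower_nest u).
have [psi [psi_b psi_low psi_u]] := hahn_banach_separation cs.1 (closed_subspace_lin cs) nlow.
have : psi (finite_op u) = 0.
  apply: finite_op_annihilated => // E NE; have [Eu|nEu] := pselect (E u); first by right.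
  by left => y Ey; apply: psi_low; apply: sub_cspan; exists E.
rewrite Gu (lmapZ (bounded_functional_linear psi_b)) => /eqP.
by rewrite mulf_eq0 (negbTE a0) (negbTE psi_u).
Qed.

(* finite_op maps lower u into a single nest element not containing u:
   one whose trace on span{x_k} is maximal among such elements. *)
Lemma lower_into_nest u : u != 0 ->
  exists2 E0, N E0 /\ ~ E0 u & forall y, lower u y -> E0 (finite_op y).
Proof.
move=> u0; pose F := [set E | N E /\ ~ E u].
have F_sub E : F E -> lin_subspace E.
  by move=> [NE _]; exact: (closed_subspace_lin (nest_closed_subspace hN NE)).
have F0 : F !=set0 by exists [set 0]; split; [exact: nest_zero | exact/eqP].
have [E0 FE0 E0max] := maximal_section combination_linear F_sub F0.
exists E0 => //; have cs0 := nest_closed_subspace hN FE0.1.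
apply: (cspan_map finite_op_continuous finite_op_linear cs0.1 (closed_subspace_lin cs0)).
move=> y [E FE Ey]; have GE := finite_op_invariant FE.1 Ey.
case: (nest_total hN FE.1 FE0.1) => [sEE0|sE0E]; first exact: sEE0.
by rewrite finite_opE; apply: (E0max E FE sE0E); rewrite -finite_opE.
Qed.

Lemma compression_eigen0 (a : R[i]) (c : 'rV[R[i]]_n) :
  c *m compression = a *: c -> c != 0 -> a = 0.
Proof.
move=> ec c0; have [//|a0] := eqVneq a 0; exfalso.
set u := combination c.
have Bu : coords u = a *: c by rewrite -compressionE.
have Gu : finite_op u = a *: u by rewrite finite_opE Bu (lmapZ combination_linear).
have u0 : u != 0.
  apply: contra_neq c0 => u0; apply/eqP; move: Bu; rewrite u0 (lmap0 coords_linear).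
  by move/esym/eqP; rewrite scaler_eq0 (negbTE a0).
have [E0 [NE0 nE0u] E0G] := lower_into_nest u0.
apply: nE0u; have := E0G _ (eigenvector_lower a0 Gu); rewrite Gu => E0au.
rewrite -[u](scale1r) -(mulVf a0) -scalerA.
exact: (lin_subspaceZ _ (closed_subspace_lin (nest_closed_subspace hN NE0)) E0au).
Qed.

Lemma key_annihilation : \sum_(k < n) phi k (T (x k)) = 0.
Proof. by rewrite -compression_trace; apply: trace_eq0_of_eigen0 => a c; exact: compression_eigen0. Qed.

End KeyLemma.

Section Reflexivity.
Variable R : realType.
Variable X : completeNormedModType R[i].
Variables (N : set (set X)) (J : set (X -> X)).
Hypothesis hJ : bimodule N J.

Lemma bimodule_sub_M : J `<=` M_of N (Phi_of J).
Proof.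
move=> T JT; split; first by case: hJ => [[J_bop _] _]; exact: J_bop.
by move=> E NE _ [y Ey <-]; apply: sub_cspan; exists T => //; exists y.
Qed.

Lemma bimodule_sub_Ref : J `<=` Ref J.
Proof.
move=> T JT; split; first by case: hJ => [[J_bop _] _]; exact: J_bop.
by move=> y; apply: sub_cspan; exists T.
Qed.

Lemma Ref_sub_M : Ref J `<=` M_of N (Phi_of J).
Proof.
move=> T [T_bop TJ]; split => // E NE _ [y Ey <-].
by apply: (cspanS _ (TJ y)) => _ [S JS <-]; exists S => //; exists y.
Qed.

(* Every T in M(Phi_J) is a WOT-limit of J: if the vector (phi_k(T x_k))_k
   were outside the subspace {(phi_k(S x_k))_k | S in J} of C^n, a linear
   form separating them would contradict the key lemma. *)
Lemma M_sub_wot_closure : nest N -> M_of N (Phi_of J) `<=` wot_closure J.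
Proof.
move=> hN T hT; split; first by case: hT.
move=> n x phi eps phi_b eps0; have [[_ [J0 JL]] _] := hJ.
pose values (S : X -> X) : 'rV[R[i]]_n := \row_k phi k (S (x k)).
pose V := [set v | exists2 S, J S & v = values S].
have V_sub : lin_subspace V.
  split.
    exists (fun _ => 0) => //; apply/rowP => k.
    by rewrite !mxE (lmap0 (bounded_functional_linear (phi_b k))).
  move=> a _ _ [S1 JS1 ->] [S2 JS2 ->]; exists (fun y => a *: S1 y + S2 y).
    exact: JL.
  by apply/rowP => k; rewrite !mxE (bounded_functional_linear (phi_b k)).
have [[S JS eS]|nV] := pselect (V (values T)).
  exists S => // k; have : values T 0 k = values S 0 k by rewrite eS.
  by rewrite !mxE => ->; rewrite subrr normr0 ltcR.
have [d [dV dT]] := row_separation V_sub nV.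
pose psi k y := d k 0 * phi k y.
have entry S : (values S *m d) 0 0 = \sum_(k < n) psi k (S (x k)).
  by rewrite mxE; apply: eq_bigr => k _; rewrite /psi mxE mulrC.
have psi_b k : bounded_functional (psi k) by apply: bounded_functional_scale.
have psi_J S : J S -> \sum_(k < n) psi k (S (x k)) = 0.
  by move=> JS; rewrite -entry (dV (values S)) ?mxE //; exists S.
exfalso; apply: (negP dT); apply/eqP/matrixP => i j; rewrite !ord1 entry [RHS]mxE.
exact: (key_annihilation hN hJ hT psi_b psi_J).
Qed.

End Reflexivity.

Theorem mainTheorem12 (R : realType) (X : completeNormedModType R[i])
  (N : set (set X)) (J : set (X -> X)) :
  nest N -> bimodule N J -> wot_closed J ->
  J = M_of N (Phi_of J) /\ J = Ref J.
Proof.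
move=> hN hJ hW.
have M_sub_J : M_of N (Phi_of J) `<=` J.
  by move=> T /(M_sub_wot_closure hJ hN); apply: hW.
split; apply/seteqP; split.
- exact: (bimodule_sub_M hJ).
- exact: M_sub_J.
- exact: (bimodule_sub_Ref hJ).
- by move=> T /(Ref_sub_M N); apply: M_sub_J.
Qed.
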